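(* There is a constant $C>0$ such that for all integers $n\ge 2$, $D\ge 1$ and $k$ with $0<k\le D$, there exist a deterministic distributed algorithm and, for every graph $G$ of size $n$ and diameter $D$, an advice assignment of size at most $C\,(1+(\log n)/k)$, under which the algorithm accomplishes labeled topology recognition in $G$ within time $D+k$.
   Context: Graphs are finite, simple, undirected, connected, with no node labels; at each node of degree $d$ the incident edges carry distinct port numbers $0,\dots,d-1$ (no coherence between endpoints). Isomorphism of such graphs is a bijection of nodes preserving edges and port numbers at both endpoints. Size = number of nodes; $\log$ is base 2. Communication model (LOCAL): synchronous rounds, all nodes start simultaneously; in each round every node may send arbitrary messages to all neighbours, receives their messages (knowing the arrival port), and performs arbitrary local computation. Initially a node knows only its degree and its advice. Advice: an oracle knowing the graph assigns each node a binary string; the size of advice is the maximum string length. All nodes run the same deterministic algorithm. Labeled topology recognition: all nodes output the same port-labeled graph $H$ with distinct node labels, and each node outputs its own label, such that there is an isomorphism from $G$ to $H$ mapping every node to the node of $H$ carrying the label it output. Time is the number of rounds until all nodes have output. *)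

From Stdlib Require Import Reals.
From mathcomp Require Import all_boot.

Set Implicit Arguments.
Unset Strict Implicit.
Unset Printing Implicit Defensive.

(* deg v = degree of v; for a port p < deg v, nbr v p is the neighbour
   reached through port p, and rport v p is the port number of that
   same edge at the other endpoint. Values for p >= deg v are irrelevant. *)
Record pgraph (n : nat) := PGraph {
  deg : 'I_n -> nat;
  nbr : 'I_n -> nat -> 'I_n;
  rport : 'I_n -> nat -> nat }.

Definition wf_pgraph n (G : pgraph n) : Prop :=
  forall (v : 'I_n) (p : nat), p < deg G v ->
    [/\ nbr G v p != v,
        rport G v p < deg G (nbr G v p),
        nbr G (nbr G v p) (rport G v p) = v,
        rport G (nbr G v p) (rport G v p) = p &
        forall q, q < deg G v -> nbr G v q = nbr G v p -> q = p].

Fixpoint reach n (G : pgraph n) (t : nat) (u v : 'I_n) : Prop :=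
  match t with
  | 0 => u = v
  | t'.+1 => reach G t' u v \/ exists2 p, p < deg G u & reach G t' (nbr G u p) v
  end.

Definition has_diameter n (G : pgraph n) (D : nat) : Prop :=
  (forall u v : 'I_n, reach G D u v) /\
  exists u v : 'I_n, ~ reach G D.-1 u v.

(* A graph H with node labels 0..size H - 1 is given by adjacency lists:
   the entry at position p of list l is (label of neighbour via port p,
   port number of that edge at the neighbour). *)
Definition out_graph := seq (seq (nat * nat)).

Definition labeled_iso n (G : pgraph n) (H : out_graph) (lab : 'I_n -> nat) : Prop :=
  [/\ size H = n,
      injective lab,
      (forall v, lab v < n) &
      forall v, size (nth [::] H (lab v)) = deg G v /\
        forall p, p < deg G v ->
          nth (0, 0) (nth [::] H (lab v)) p = (lab (nbr G v p), rport G v p)].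

(* S = local state type, M = message type (both arbitrary).
   a_init d a : initial state from the degree d and the advice a.
   a_send s p : message sent through port p in state s.
   a_update s ms : new state after receiving ms, where the p-th entry of ms
     is the message that arrived through port p.
   a_output s : the output (H, own label), if the node outputs in state s. *)
Record algorithm (S M : Type) := Algo {
  a_init : nat -> seq bool -> S;
  a_send : S -> nat -> M;
  a_update : S -> seq M -> S;
  a_output : S -> option (out_graph * nat) }.

Fixpoint run S M (A : algorithm S M) n (G : pgraph n) (adv : 'I_n -> seq bool)
    (t : nat) (v : 'I_n) : S :=
  match t with
  | 0 => a_init A (deg G v) (adv v)
  | t'.+1 =>
      a_update A (run A G adv t' v)
        [seq a_send A (run A G adv t' (nbr G v p)) (rport G v p)
        | p <- iota 0 (deg G v)]
  end.

Definition advice_size n (adv : 'I_n -> seq bool) : nat :=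
  \max_(v : 'I_n) size (adv v).

Definition solves_LTR_within S M (A : algorithm S M) n (G : pgraph n)
    (adv : 'I_n -> seq bool) (T : nat) : Prop :=
  exists (H : out_graph) (lab : 'I_n -> nat),
    (forall v : 'I_n, exists2 t, t <= T &
        a_output A (run A G adv t v) = Some (H, lab v) /\
        forall t', t' < t -> a_output A (run A G adv t' v) = None) /\
    labeled_iso G H lab.

Definition log2 (x : R) : R := Rdiv (ln x) (ln (INR 2)).

(* Let m = (k-1)/3.  The oracle picks a maximal set of centres
   pairwise more than 2m apart and, from each centre c, a geodesic ray
   c = r_0, ..., r_m, which exists because the diameter is at least k.  Node r_i
   receives a constant-size header and the i-th of m+1 pieces of a
   (log n + 1)-bit identifier of c, hence O(1 + log n / k) bits.  Rays of
   distinct centres are disjoint, so from its view of depth m a centre can walk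
   its own ray and read its identifier; as every node lies within 2m of a
   centre, all views of depth k-1 are pairwise distinct.  After D+k rounds of
   flooding a node knows its view of depth D+k, which determines the graph with
   its advice up to a port-preserving isomorphism; numbering the nodes by their
   views of depth k-1 then gives every node the same labelled output graph. *)

From Stdlib Require Import Reals Lra ClassicalEpsilon.
From mathcomp Require Import all_boot zify.

Set Implicit Arguments.
Unset Strict Implicit.
Unset Printing Implicit Defensive.

Section Distances.

Variables (n : nat) (G : pgraph n).

Definition adj (x y : 'I_n) := exists2 p, p < deg G x & nbr G x p = y.

Definition at_dist (c x : 'I_n) j := reach G j c x /\ forall i, i < j -> ~ reach G i c x.

Fixpoint reachb t (u v : 'I_n) : bool :=
  if t is t'.+1 then reachb t' u v || has (fun p => reachb t' (nbr G u p) v) (iota 0 (deg G u))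
  else u == v.

Lemma reachP t u v : reflect (reach G t u v) (reachb t u v).
Proof.
elim: t u => [|t IH] u /=; first exact: eqP.
apply: (iffP orP) => [[/IH|/hasP[p]]|[/IH|[p lt /IH]]]; [by left| |by left|].
- by rewrite mem_iota => /andP[_ lt] /IH; right; exists p.
- by right; apply/hasP; exists p; rewrite ?mem_iota.
Qed.

Lemma reach_mono s t x y : s <= t -> reach G s x y -> reach G t x y.
Proof.
elim: t => [|t IH]; first by rewrite leqn0 => /eqP->.
by rewrite leq_eqVlt ltnS => /predU1P[-> //|st] /(IH st); left.
Qed.

Lemma reach_trans a b x y z : reach G a x y -> reach G b y z -> reach G (a + b) x z.
Proof.
elim: a x => [|a IH] x /=; first by move->.
by case=> [/IH H /H|[p lt /IH H /H]]; [left | right; exists p].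
Qed.

Lemma reach_step t x y z : reach G t x y -> adj y z -> reach G t.+1 x z.
Proof.
move=> Rxy [p lt Ez]; rewrite -addn1; apply: reach_trans Rxy _.
by right; exists p; rewrite ?Ez.
Qed.

Lemma at_dist_min c x i j : at_dist c x j -> reach G i c x -> j <= i.
Proof. by case=> _ dmin Ri; rewrite leqNgt; apply/negP => /dmin. Qed.

Lemma at_dist_uniq c x i j : at_dist c x i -> at_dist c x j -> i = j.
Proof.
move=> Di Dj; apply/eqP; rewrite eqn_leq.
by rewrite (at_dist_min Di (proj1 Dj)) (at_dist_min Dj (proj1 Di)).
Qed.

Hypothesis wf : wf_pgraph G.

Lemma adj_sym x y : adj x y -> adj y x.
Proof. case=> p lt <-; have [_ ? ? _ _] := wf lt; by exists (rport G x p). Qed.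

Lemma reach_sym t x y : reach G t x y -> reach G t y x.
Proof.
elim: t x => [|t IH] x /=; first by move->.
case=> [/IH|[p lt /IH Ry]]; first by left.
by apply: reach_step Ry _; apply: adj_sym; exists p.
Qed.

Lemma at_dist_exists c w t : reach G t c w -> exists d, at_dist c w d.
Proof.
move=> /reachP Rt; have exd : exists t, reachb t c w by exists t.
case: (ex_minnP exd) => d /reachP Rd dmin; exists d; split=> // i lt /reachP /dmin.
by rewrite leqNgt lt.
Qed.

Lemma at_dist_pred c w j : at_dist c w j.+1 -> exists2 x, at_dist c x j & adj x w.
Proof.
case=> /reach_sym /= [/reach_sym Rj|[p lt /reach_sym Rj]] dmin.
  by case: (dmin j).
have Ax : adj (nbr G w p) w by apply: adj_sym; exists p.
exists (nbr G w p) => //; split=> // i ij Ri.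
by apply: (dmin i.+1); [| exact: reach_step Ri Ax].
Qed.

Lemma geodesic_exists c w d : at_dist c w d ->
  exists g : nat -> 'I_n, [/\ g d = w, forall j, j <= d -> at_dist c (g j) j &
                               forall j, j < d -> adj (g j) (g j.+1)].
Proof.
elim: d w => [|d IH] w.
  case=> /= <- _; exists (fun _ => c); split=> // j; rewrite leqn0 => /eqP->.
  by split=> // i; rewrite ltn0.
move=> Hw; case/at_dist_pred: (Hw) => x /IH[g [gd Hg Ag]] Axw.
exists (fun j => if j <= d then g j else w); split=> [|j jd|j jd]; first by rewrite ltnn.
- by case: leqP => [/Hg //|dj]; have -> : j = d.+1 by lia.
- rewrite ltnS in jd; rewrite jd; case: (leqP j.+1 d) => [/Ag //|dj].
  have -> : j = d by lia.
  by rewrite gd.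
Qed.

Lemma maximal_separated_set r : exists A : {set 'I_n},
  (forall a b, a \in A -> b \in A -> reach G r a b -> a = b) /\
  (forall u, exists2 a, a \in A & reach G r u a).
Proof.
pose P (B : {set 'I_n}) := [forall a in B, forall b in B, reachb r a b ==> (a == b)].
have P0 : P set0 by apply/forall_inP => a; rewrite inE.
have [A /maxsetP[PA maxA] _] := maxset_exists P0.
have sepA a b : a \in A -> b \in A -> reachb r a b -> a == b.
  by move=> aA bA; move/forall_inP: PA => /(_ a aA)/forall_inP/(_ b bA)/implyP.
exists A; split=> [a b aA bA /reachP /(sepA a b aA bA) /eqP //|u].
case: (boolP [exists a in A, reachb r u a]) => [/exists_inP[a aA /reachP]|/exists_inPn Hu].
  by exists a.
have PuA : P (u |: A).
  apply/forall_inP => a /setU1P Ha; apply/forall_inP => b /setU1P Hb; apply/implyP.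
  case: Ha Hb => [->|aA] [->|bA] //; first by move=> R; case/negP: (Hu b bA).
    by move=> /reachP /reach_sym /reachP R; case/negP: (Hu a aA).
  exact: sepA.
have uA : u \in A by rewrite -(maxA _ PuA (subsetUr _ _)) setU11.
by case/negP: (Hu u uA); apply/reachP; apply: (reach_mono (leq0n r)).
Qed.

Lemma geodesic_ray D m c : has_diameter G D -> m + m <= D.+1 ->
  exists g : nat -> 'I_n, (forall j, j <= m -> at_dist c (g j) j) /\
                          (forall j, j < m -> adj (g j) (g j.+1)).
Proof.
move=> [Hall [u [v Huv]]] mD.
have [w Rw] : exists w, ~ reach G m.-1 c w.
  case: (reachP m.-1 c u) => [Ru|]; last by exists u.
  case: (reachP m.-1 c v) => [Rv|]; last by exists v.
  by case: Huv; apply: reach_mono (reach_trans (reach_sym Ru) Rv); lia.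
have [d Hd] := at_dist_exists (Hall c w).
have [g [_ Hg Ag]] := geodesic_exists Hd.
have md : m <= d by case: leqP => // dm; case: Rw; apply: reach_mono (proj1 Hd); lia.
by exists g; split=> j jm; [apply: Hg | apply: Ag]; lia.
Qed.

End Distances.

Definition view_tree := GenTree.tree nat.

Fixpoint view n (G : pgraph n) (a : 'I_n -> seq bool) t (v : 'I_n) : view_tree :=
  if t is t'.+1 then
    GenTree.Node 1 (view G a t' v ::
      [seq GenTree.Node 2 [:: view G a t' (nbr G v p); GenTree.Leaf (rport G v p)]
      | p <- iota 0 (deg G v)])
  else GenTree.Node 0 [:: GenTree.Leaf (deg G v); GenTree.Leaf (pickle (a v))].

Definition port_morphism n (G1 G2 : pgraph n) (a1 a2 : 'I_n -> seq bool)
    (phi : 'I_n -> 'I_n) :=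
  forall u, [/\ deg G2 (phi u) = deg G1 u, a2 (phi u) = a1 u &
    forall p, p < deg G1 u ->
      nbr G2 (phi u) p = phi (nbr G1 u p) /\ rport G2 (phi u) p = rport G1 u p].

Section Views.

Variables (n : nat) (G1 G2 : pgraph n) (a1 a2 : 'I_n -> seq bool).

Lemma view_succ_inv t x1 x2 :
  view G1 a1 t.+1 x1 = view G2 a2 t.+1 x2 ->
  [/\ view G1 a1 t x1 = view G2 a2 t x2, deg G1 x1 = deg G2 x2 &
      forall p, p < deg G1 x1 ->
        view G1 a1 t (nbr G1 x1 p) = view G2 a2 t (nbr G2 x2 p) /\
        rport G1 x1 p = rport G2 x2 p].
Proof.
case=> Et Es; have Ed : deg G1 x1 = deg G2 x2.
  by have := congr1 size Es; rewrite !size_map !size_iota.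
split=> // p lt; move/(congr1 (nth (GenTree.Leaf 0) ^~ p)): Es.
by rewrite !(nth_map 0) ?size_iota -?Ed // !nth_iota -?Ed // => -[-> ->].
Qed.

Lemma view_local t x1 x2 :
  view G1 a1 t x1 = view G2 a2 t x2 -> deg G1 x1 = deg G2 x2 /\ a1 x1 = a2 x2.
Proof.
elim: t => [|t IH]; last by case/view_succ_inv => /IH.
by case=> -> /(pcan_inj pickleK).
Qed.

Lemma view_le s t x1 x2 : s <= t ->
  view G1 a1 t x1 = view G2 a2 t x2 -> view G1 a1 s x1 = view G2 a2 s x2.
Proof.
elim: t => [|t IH]; first by rewrite leqn0 => /eqP->.
by rewrite leq_eqVlt ltnS => /predU1P[-> //|st] /view_succ_inv[/(IH st)].
Qed.

Lemma view_morph phi : port_morphism G1 G2 a1 a2 phi ->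
  forall t u, view G2 a2 t (phi u) = view G1 a1 t u.
Proof.
move=> Hphi; elim=> [|t IH] u /=; have [Hd Ha Hn] := Hphi u; first by rewrite Hd Ha.
rewrite IH Hd; congr (GenTree.Node _ (_ :: _)); apply/eq_in_map => p.
by rewrite mem_iota => /andP[_ lt]; have [-> ->] := Hn p lt; rewrite IH.
Qed.

Lemma view_transport t s x1 x2 y1 :
  view G1 a1 (s + t) x1 = view G2 a2 (s + t) x2 -> reach G1 t x1 y1 ->
  exists y2, view G1 a1 s y1 = view G2 a2 s y2.
Proof.
elim: t x1 x2 => [|t IH] x1 x2; first by rewrite addn0 => E /= <-; exists x2.
rewrite addnS => /view_succ_inv[E _ En] /= [/(IH _ _ E) //|[p lt]].
by have [/IH Ep _] := En p lt; apply: Ep.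
Qed.

End Views.

Lemma view_transport_inj n (G : pgraph n) a t s x1 x2 y1 : wf_pgraph G ->
  view G a (s + t) x1 = view G a (s + t) x2 -> reach G t x1 y1 ->
  exists y2, view G a s y1 = view G a s y2 /\ (y1 = y2 -> x1 = x2).
Proof.
move=> wf; elim: t x1 x2 => [|t IH] x1 x2; first by rewrite addn0 => E /= <-; exists x2.
rewrite addnS => /view_succ_inv[E Ed En] /= [/(IH _ _ E)[y2 [Ey I2]]|[p lt]].
  by exists y2.
have [/IH Ep Er] := En p lt; move/Ep=> [y2 [Ey I2]]; exists y2; split=> // /I2 E12.
have [_ _ B1 _ _] := wf x1 p lt; have [_ _ B2 _ _] := wf x2 p (leq_trans lt (eq_leq Ed)).
by rewrite -B1 -B2 E12 Er.
Qed.

Section CanonicalLabelling.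

Variables (n t : nat).

Definition view_key (G : pgraph n) a (u : 'I_n) := pickle (view G a t u).

Definition view_rank (G : pgraph n) a (u : 'I_n) :=
  #|[set w | view_key G a w < view_key G a u]|.

Definition canon_row (G : pgraph n) a (w : 'I_n) : seq (nat * nat) :=
  [seq (view_rank G a (nbr G w p), rport G w p) | p <- iota 0 (deg G w)].

Definition canon_graph (G : pgraph n) a : out_graph :=
  mkseq (fun i => if [pick w | view_rank G a w == i] is Some w then canon_row G a w
                  else [::]) n.

Lemma view_rank_lt G a u : view_rank G a u < n.
Proof.
rewrite -[ltnRHS]card_ord -cardsT; apply: proper_card; apply/properP.
by split; [exact: subsetT | exists u; rewrite !inE ?ltnn].
Qed.

Lemma view_rank_inj G a : injective (view G a t) -> injective (view_rank G a).
Proof.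
move=> inj_view.
have mono u w : view_key G a u < view_key G a w -> view_rank G a u < view_rank G a w.
  move=> lt; apply: proper_card; apply/properP; split; last by exists u; rewrite !inE ?ltnn.
  by apply/subsetP => x; rewrite !inE => /ltn_trans; apply.
move=> u w E; case: (ltngtP (view_key G a u) (view_key G a w)) => [/mono|/mono|];
  by [rewrite E ltnn | move/(pcan_inj pickleK)/inj_view].
Qed.

Lemma canon_graph_iso G a :
  injective (view G a t) -> labeled_iso G (canon_graph G a) (view_rank G a).
Proof.
move=> inj_view; split=> [|||v]; [exact: size_mkseq | exact: view_rank_inj | exact: view_rank_lt|].
rewrite nth_mkseq ?view_rank_lt //.
case: pickP => [w /eqP /(view_rank_inj inj_view) ->|/(_ v)]; last by rewrite eqxx.
split=> [|p lt]; first by rewrite size_map size_iota.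
by rewrite (nth_map 0) ?size_iota // nth_iota.
Qed.

Lemma view_rank_morph G1 G2 a1 a2 phi :
  port_morphism G1 G2 a1 a2 phi -> injective phi ->
  forall u, view_rank G2 a2 (phi u) = view_rank G1 a1 u.
Proof.
move=> Hphi inj_phi u; rewrite /view_rank -(card_preimset _ inj_phi).
by apply: eq_card => w; rewrite !inE /view_key !(view_morph Hphi).
Qed.

Lemma canon_graph_morph G1 G2 a1 a2 phi :
  port_morphism G1 G2 a1 a2 phi -> injective phi -> injective (view G1 a1 t) ->
  canon_graph G2 a2 = canon_graph G1 a1.
Proof.
move=> Hphi inj_phi inj_view; have [psi _ psiK] := injF_bij inj_phi.
have rankE := view_rank_morph Hphi inj_phi.
apply: eq_mkseq => i; case: pickP => [w2 /eqP E2|N2]; case: pickP => [w1 /eqP E1|N1] //.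
- have -> : w2 = phi w1.
    by rewrite -(psiK w2); congr phi; apply: (view_rank_inj inj_view); rewrite -rankE psiK E1.
  rewrite /canon_row; have [-> _ Hn] := Hphi w1; apply/eq_in_map => p.
  by rewrite mem_iota => /andP[_ /Hn[-> ->]]; rewrite rankE.
- by have := N1 (psi w2); rewrite -rankE psiK E2 eqxx.
- by have := N2 (phi w1); rewrite rankE E1 eqxx.
Qed.

End CanonicalLabelling.

Lemma view_morphism_exists n D t (G1 G2 : pgraph n) a1 a2 v1 v2 :
  (forall u, reach G1 D v1 u) -> injective (view G1 a1 t) -> injective (view G2 a2 t) ->
  view G1 a1 (D + t.+1) v1 = view G2 a2 (D + t.+1) v2 ->
  exists2 phi, port_morphism G1 G2 a1 a2 phi /\ injective phi & phi v1 = v2.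
Proof.
move=> Hr inj1 inj2 E.
pose phi u := odflt v2 [pick w | view G2 a2 t.+1 w == view G1 a1 t.+1 u].
have Hphi u : view G2 a2 t.+1 (phi u) = view G1 a1 t.+1 u.
  rewrite addnC in E; have [w Ew] := view_transport E (Hr u).
  by rewrite /phi; case: pickP => [w' /eqP //|/(_ w)]; rewrite Ew eqxx.
have morph : port_morphism G1 G2 a1 a2 phi.
  move=> u; have [_ Ed En] := view_succ_inv (Hphi u); have [_ Ea] := view_local (Hphi u).
  split=> // p lt; have lt2 : p < deg G2 (phi u) by rewrite Ed.
  have [Ev Er] := En p lt2; split=> //; apply: inj2; rewrite Ev.
  exact: esym (view_le (leqnSn t) (Hphi _)).
exists phi; last by apply: inj2; rewrite (view_morph morph); apply: view_le E; lia.
by split=> // u w /(congr1 (view G2 a2 t)); rewrite !(view_morph morph) => /inj1.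
Qed.

Definition id_length n := (trunc_log 2 n).+1.

Definition node_id n (x : 'I_n) : seq bool :=
  val (nth (nseq_tuple (id_length n) false) (enum {: (id_length n).-tuple bool}) x).

Definition piece_length n m := id_length n %/ m.+1 + 1.

Definition id_piece n m (x : 'I_n) i :=
  nth [::] (reshape (nseq m.+1 (piece_length n m)) (node_id x)) i.

(* Bit 1 separates marked nodes from the all-false default advice, bit 0 marks
   the centre, and bits 2-3 give the position mod 3, which tells a node on a
   ray its successor apart from its predecessor. *)
Definition ray_code n m (x : 'I_n) i :=
  [:: i == 0; true; i %% 3 == 1; i %% 3 == 2] ++ id_piece m x i.

Lemma size_node_id n (x : 'I_n) : size (node_id x) = id_length n.
Proof. exact: size_tuple. Qed.

Lemma node_id_inj n : injective (@node_id n).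
Proof.
have lt_card (x : 'I_n) : x < size (enum {: (id_length n).-tuple bool}).
  rewrite -cardE card_tuple card_bool; apply: ltn_trans (ltn_ord x) _.
  exact: trunc_log_ltn.
move=> x y /val_inj /eqP; rewrite nth_uniq ?enum_uniq ?lt_card //.
by move/eqP/val_inj.
Qed.

Lemma size_id_piece n m (x : 'I_n) i : size (id_piece m x i) <= piece_length n m.
Proof. by rewrite /id_piece nth_reshape size_take nth_nseq; case: ifP; case: ifP => //; lia. Qed.

Lemma id_piece_inj n m (x y : 'I_n) :
  (forall i, i <= m -> id_piece m x i = id_piece m y i) -> x = y.
Proof.
move=> Exy; apply: node_id_inj.
have fits (z : 'I_n) : size (node_id z) <= sumn (nseq m.+1 (piece_length n m)).
  by rewrite size_node_id sumn_nseq /piece_length addn1 ltnW // ltn_ceil.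
rewrite -(reshapeKr (fits x)) -(reshapeKr (fits y)); congr flatten.
apply: (@eq_from_nth _ [::]); first by rewrite !size_reshape.
by move=> i; rewrite size_reshape size_nseq ltnS => /Exy.
Qed.

Lemma ray_code_inj n m (x y : 'I_n) i j : ray_code m x i = ray_code m y j ->
  [/\ (i == 0) = (j == 0), i %% 3 = j %% 3 & id_piece m x i = id_piece m y j].
Proof.
case=> E0 E1 E2 E3; split=> //.
have := ltn_pmod i (isT : 0 < 3); have := ltn_pmod j (isT : 0 < 3).
by move: E1 E2; case: (i %% 3) => [|[|[|?]]]; case: (j %% 3) => [|[|[|?]]].
Qed.

Section Marking.

Variables (n m : nat) (G : pgraph n) (A : {set 'I_n}) (ray : 'I_n -> nat -> 'I_n).

Hypothesis wf : wf_pgraph G.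
Hypothesis A_sep : forall a b, a \in A -> b \in A -> reach G (m + m) a b -> a = b.
Hypothesis A_cover : forall u, exists2 a, a \in A & reach G (m + m) u a.
Hypothesis ray_dist : forall a j, j <= m -> at_dist G a (ray a j) j.
Hypothesis ray_adj : forall a j, j < m -> adj G (ray a j) (ray a j.+1).

Definition marking (u : 'I_n) : seq bool :=
  if [pick ai : 'I_n * 'I_m.+1 | (ai.1 \in A) && (ray ai.1 ai.2 == u)] is Some ai
  then ray_code m ai.1 ai.2 else nseq (4 + piece_length n m) false.

Lemma ray0 a : ray a 0 = a.
Proof. by case: (ray_dist a (leq0n m)). Qed.

Lemma ray_inj a b i j : a \in A -> b \in A -> i <= m -> j <= m ->
  ray a i = ray b j -> a = b /\ i = j.
Proof.
move=> aA bA im jm Eab; have Di := ray_dist a im; have Dj := ray_dist b jm.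
have Rab : reach G (i + j) a b.
  by apply: reach_trans (proj1 Di) _; rewrite Eab; exact: reach_sym (proj1 Dj).
have ab : a = b by apply: A_sep => //; apply: reach_mono Rab; lia.
by subst b; split=> //; apply: at_dist_uniq Di _; rewrite Eab.
Qed.

Lemma marking_ray a i : a \in A -> i <= m -> marking (ray a i) = ray_code m a i.
Proof.
move=> aA im; rewrite /marking; case: pickP => [[a' i'] /= /andP[a'A /eqP E]|].
  by have [-> ->] := ray_inj a'A aA (ltn_ord i') im E.
by move/(_ (a, Ordinal (im : i < m.+1))) => /=; rewrite aA eqxx.
Qed.

Lemma marking_codeP u (c : 'I_n) j : marking u = ray_code m c j ->
  exists a i, [/\ a \in A, i <= m, ray a i = u & ray_code m a i = ray_code m c j].
Proof.
rewrite /marking; case: pickP => [[a i] /= /andP[aA /eqP E] Ec|_]; last first.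
  by move/(congr1 (nth false ^~ 1)).
by exists a, i; split=> //; rewrite -ltnS.
Qed.

Lemma size_marking u : size (marking u) <= 4 + piece_length n m.
Proof.
rewrite /marking; case: pickP => [ai _|_]; last by rewrite size_nseq.
by rewrite size_cat leq_add2l size_id_piece.
Qed.

Lemma marked_centre u (c : 'I_n) : marking u = ray_code m c 0 -> u \in A.
Proof.
case/marking_codeP=> a [i [aA im <- /ray_code_inj[i0 _ _]]].
by move/eqP: i0 => ->; rewrite ray0.
Qed.

Lemma ray_succ_unique (c : 'I_n) c' j y : c' \in A -> j < m -> adj G (ray c' j) y ->
  marking y = ray_code m c j.+1 -> y = ray c' j.+1.
Proof.
move=> c'A jm Ay /marking_codeP[a [i [aA im Ey /ray_code_inj[i0 i3 _]]]].
have Ryc' : reach G j.+1 c' y := reach_step (proj1 (ray_dist c' (ltnW jm))) Ay.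
have Rya : reach G i y a by rewrite -Ey; exact: reach_sym (proj1 (ray_dist a im)).
have ac' : a = c'.
  by apply/esym/A_sep => //; apply: reach_mono (reach_trans Ryc' Rya); lia.
subst a; have ij : i <= j.+1 by apply: at_dist_min Ryc'; rewrite -Ey; apply: ray_dist.
have ji : j <= i.+1.
  apply: at_dist_min (ray_dist c' (ltnW jm)) _.
  by apply: reach_step (proj1 (ray_dist c' im)) _; rewrite Ey; apply: adj_sym.
by have -> : j.+1 = i by move: i0 i3; lia.
Qed.

Lemma ray_view_follow c c' : c \in A -> c' \in A ->
  view G marking m c = view G marking m c' ->
  forall j, j <= m -> view G marking (m - j) (ray c j) = view G marking (m - j) (ray c' j).
Proof.
move=> cA c'A E; elim=> [|j IH] jm; first by rewrite subn0 !ray0.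
move: (IH (ltnW jm)); rewrite -(subnSK jm) => /view_succ_inv[_ Ed En].
have [p lt Ep] := ray_adj c jm; have [Ev _] := En p lt.
have Ay : adj G (ray c' j) (nbr G (ray c' j) p) by exists p; rewrite -?Ed.
have [_ Ey] := view_local Ev; rewrite Ep marking_ray // in Ey Ev.
by rewrite -(ray_succ_unique c'A jm Ay (esym Ey)).
Qed.

Lemma centre_view_inj c c' : c \in A -> view G marking m c = view G marking m c' -> c = c'.
Proof.
move=> cA E; have [_ Ec] := view_local E.
have c'A : c' \in A by apply: (@marked_centre _ c); rewrite -Ec -{1}(ray0 c) marking_ray.
apply: (@id_piece_inj n m) => j jm.
have [_ Ej] := view_local (ray_view_follow cA c'A E jm).
by move: Ej; rewrite !marking_ray // => /ray_code_inj[].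
Qed.

Lemma marking_view_inj t : 3 * m <= t -> injective (view G marking t).
Proof.
move=> mt u u' E; have [c cA Ruc] := A_cover u.
set s := t - (m + m).
have E' : view G marking (s + (m + m)) u = view G marking (s + (m + m)) u'.
  by rewrite subnK //; lia.
have [c' [Ec Imp]] := view_transport_inj wf E' Ruc.
by apply: Imp; apply: centre_view_inj => //; apply: view_le Ec; lia.
Qed.

End Marking.

Lemma good_marking_exists n D m t (G : pgraph n) : wf_pgraph G -> has_diameter G D ->
  3 * m <= t -> m + m <= D.+1 ->
  exists adv, advice_size adv <= 4 + piece_length n m /\ injective (view G adv t).
Proof.
move=> wf diam mt mD; have [A [A_sep A_cover]] := maximal_separated_set wf (m + m).
have [ray Hray] := ClassicalEpsilon.choice _ (fun c => geodesic_ray wf c diam mD).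
exists (marking m A ray); split; first by apply/bigmax_leqP => u _; apply: size_marking.
by apply: marking_view_inj => // a; have [] := Hray a.
Qed.

Section RealBounds.

Local Open Scope R_scope.

Lemma INR_expn b l : INR (b ^ l)%N = INR b ^ l.
Proof. by elim: l => [|l IH] //; rewrite expnS mult_INR IH. Qed.

Lemma trunc_log2_le_log2 n : (0 < n)%N -> INR (trunc_log 2 n) <= log2 (INR n).
Proof.
move=> n0; set l := trunc_log 2 n.
have two : INR 2 = 2 by rewrite /=; lra.
have ln2 : 0 < ln (INR 2) by rewrite two; have := ln_lt_2; lra.
have pow_pos : 0 < INR 2 ^ l by apply: pow_lt; rewrite /=; lra.
have pow_le : INR 2 ^ l <= INR n by rewrite -INR_expn; apply/le_INR/leP/trunc_logP.
have : ln (INR 2 ^ l) <= ln (INR n).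
  case: (Rle_lt_or_eq_dec _ _ pow_le) => [/(ln_increasing _ _ pow_pos)/Rlt_le //|->].
  exact: Rle_refl.
rewrite ln_pow; last by rewrite /=; lra.
move=> H; rewrite /log2 /Rdiv; apply: (Rmult_le_reg_r (ln (INR 2))) => //.
by rewrite Rmult_assoc Rinv_l; lra.
Qed.

Lemma advice_bound n k s :
  (0 < n)%N -> (0 < k)%N -> (s <= 4 + piece_length n (k.-1 %/ 3))%N ->
  INR s <= 8 * (1 + log2 (INR n) / INR k).
Proof.
move=> n0 k0 hs; set l := trunc_log 2 n.
have Hnat : (s * k <= 8 * (k + l))%N.
  have Hq := leq_divM (id_length n) (k.-1 %/ 3).+1.
  have Hk : (k <= 3 * (k.-1 %/ 3).+1)%N by lia.
  move: hs Hq; rewrite /piece_length /id_length -/l; set q := _ %/ _; nia.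
have kR : 0 < INR k by apply/lt_0_INR/ltP.
have HR : INR s * INR k <= INR 8 * (INR k + INR l).
  by rewrite -mult_INR -plus_INR -mult_INR; apply/le_INR/leP.
have eight : INR 8 = 8 by rewrite /=; lra.
have Hl := trunc_log2_le_log2 n0.
apply: (Rmult_le_reg_r (INR k)) => //.
have -> : 8 * (1 + log2 (INR n) / INR k) * INR k = 8 * (INR k + log2 (INR n)) by field; lra.
by rewrite eight -/l in HR Hl; lra.
Qed.

End RealBounds.

Section FullInformation.

Variables (n D t B : nat) (x0 : 'I_n).

Definition good_advice_for (G : pgraph n) (adv : 'I_n -> seq bool) :=
  advice_size adv <= B /\ injective (view G adv t).

(* The decoder must recompute the advice of a candidate graph, so the oracle
   uses a fixed choice function of the graph. *)
Definition good_advice (G : pgraph n) : 'I_n -> seq bool :=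
  epsilon (inhabits (fun _ => [::])) (good_advice_for G).

Lemma good_adviceP G :
  (exists adv, good_advice_for G adv) -> good_advice_for G (good_advice G).
Proof. exact: epsilon_spec. Qed.

Definition decodable (V : view_tree) (Gv : {G : pgraph n & 'I_n}) :=
  let: existT G v := Gv in
  injective (view G (good_advice G) t) /\ view G (good_advice G) (D + t.+1) v = V.

Definition decode (V : view_tree) : out_graph * nat :=
  let G0 := PGraph (fun _ => 0) (fun _ _ => x0) (fun _ _ => 0) in
  let: existT G v := epsilon (inhabits (existT _ G0 x0)) (decodable V) in
  (canon_graph t G (good_advice G), view_rank t G (good_advice G) v).

Definition full_info_algorithm : algorithm (nat * view_tree) (view_tree * nat) :=
  Algo (fun d a => (0, GenTree.Node 0 [:: GenTree.Leaf d; GenTree.Leaf (pickle a)]))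
       (fun s p => (s.2, p))
       (fun s ms => (s.1.+1, GenTree.Node 1
          (s.2 :: [seq GenTree.Node 2 [:: msg.1; GenTree.Leaf msg.2] | msg <- ms])))
       (fun s => if s.1 == D + t.+1 then Some (decode s.2) else None).

Lemma run_full_info (G : pgraph n) adv r v :
  run full_info_algorithm G adv r v = (r, view G adv r v).
Proof.
elim: r v => [|r IH] v //=; rewrite IH /= -map_comp.
by congr (_, GenTree.Node _ (_ :: _)); apply/eq_map => p /=; rewrite IH.
Qed.

Lemma decode_view (G : pgraph n) v : (forall u, reach G D v u) ->
  injective (view G (good_advice G) t) ->
  decode (view G (good_advice G) (D + t.+1) v) =
    (canon_graph t G (good_advice G), view_rank t G (good_advice G) v).
Proof.
move=> Hr inj; rewrite /decode; set Gv := epsilon _ _.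
have : decodable (view G (good_advice G) (D + t.+1) v) Gv.
  by apply: epsilon_spec; exists (existT _ G v).
case: Gv => G' v' [inj' E].
have [phi [Hphi inj_phi] <-] := view_morphism_exists Hr inj inj' (esym E).
by rewrite (canon_graph_morph Hphi inj_phi inj) (view_rank_morph _ Hphi inj_phi).
Qed.

Lemma full_info_solves (G : pgraph n) : (forall u v, reach G D u v) ->
  injective (view G (good_advice G) t) ->
  solves_LTR_within full_info_algorithm G (good_advice G) (D + t.+1).
Proof.
move=> Hr inj; exists (canon_graph t G (good_advice G)), (view_rank t G (good_advice G)).
split=> [v|]; last exact: canon_graph_iso.
exists (D + t.+1) => //; rewrite run_full_info /= eqxx decode_view //.
by split=> // r lt; rewrite run_full_info /= ltn_eqF.
Qed.

End FullInformation.

Theorem theorem4p1 :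
  exists C : R, Rlt (INR 0) C /\
  forall n D k : nat, (2 <= n)%N -> (1 <= D)%N -> (0 < k)%N -> (k <= D)%N ->
    exists (S M : Type) (A : algorithm S M),
      forall G : pgraph n, wf_pgraph G -> has_diameter G D ->
        exists adv : 'I_n -> seq bool,
          Rle (INR (advice_size adv))
              (Rmult C (Rplus (INR 1) (Rdiv (log2 (INR n)) (INR k)))) /\
          solves_LTR_within A G adv (D + k).
Proof.
exists (IZR 8); split=> [|n D k n2 _ k0 kD]; first by rewrite /=; lra.
set t := k.-1; set B := 4 + piece_length n (t %/ 3).
have x0 : 'I_n := Ordinal (ltnW n2).
exists _, _, (full_info_algorithm D t B x0) => G wf diam.
have mt : 3 * (t %/ 3) <= t by lia.
have mD : t %/ 3 + t %/ 3 <= D.+1 by lia.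
have [adv_size adv_inj] := good_adviceP (good_marking_exists wf diam mt mD).
exists (good_advice t B G); split; first exact: advice_bound (ltnW n2) k0 adv_size.
have -> : D + k = D + t.+1 by rewrite prednK.
exact: full_info_solves (proj1 diam) adv_inj.
Qed.
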